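(* Let $n$ be a positive integer and $q=p^k$ a prime power with $k\ge2$. Then there are at least $p^k(p-1)^k/2^k-q$ intervals $L\subseteq[q-1]$ such that every $q$-modular $L$-differencing Sperner system $\mathcal{F}\subseteq2^{[n]}$ satisfies $$|\mathcal{F}|\le\sum_{i=0}^{|L|}\binom{n-1}{i}.$$
   Context: An interval is a nonempty set of consecutive integers. For $L\subseteq[q-1]$, $\mathcal{F}\subseteq2^{[n]}$ is $q$-modular $L$-differencing Sperner if for all distinct $A,B\in\mathcal{F}$, $|A\setminus B|\equiv\ell\pmod q$ for some $\ell\in L$. *)

From mathcomp Require Import all_boot all_order all_algebra.
Set Implicit Arguments. Unset Strict Implicit. Unset Printing Implicit Defensive.

(* Ground set [n] = {1,..,n} is represented by 'I_n; residues [q-1] = {1,..,q-1}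
   are the nonzero elements of 'I_q. *)

Definition diff_sperner (q n : nat) (L : {set 'I_q}) (F : {set {set 'I_n}}) : bool :=
  [forall A in F, forall B in F,
     (A != B) ==> [exists l in L, #|A :\: B| %% q == (nat_of_ord l) %% q]].

Definition is_interval_in (q : nat) (L : {set 'I_q}) : bool :=
  [exists a : 'I_q, exists b : 'I_q,
     (0 < nat_of_ord a <= nat_of_ord b) &&
     (L == [set i : 'I_q | nat_of_ord a <= nat_of_ord i <= nat_of_ord b])].

Definition good_bound (q n : nat) (L : {set 'I_q}) : bool :=
  [forall F : {set {set 'I_n}},
     diff_sperner L F ==> (#|F| <= \sum_(i < #|L|.+1) 'C(n.-1, i))].

From mathcomp Require Import all_boot all_order all_algebra.
From mathcomp Require Import zify.
Import Order.TTheory GRing.Theory Num.Theory.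
Set Implicit Arguments. Unset Strict Implicit. Unset Printing Implicit Defensive.

(* For [0 < d <= c < q] such that [p] does not divide ['C(c, d)], the interval
   [L = {q - c, ..., q - c + d - 1}] satisfies the bound.  If [|A :\: B| = l (mod q)]
   with [l \in L], then [|A :\: B| + c] is congruent mod [q] to some [r < d < q], so
   [p] divides ['C(|A :\: B| + c, d)] by Vandermonde's identity, while the diagonal
   value ['C(c, d)] is a unit mod [p].  Over ['F_p] the matrix of these binomials on
   [F] is thus a nonzero scalar matrix, and (Vandermonde again) its rows lie in the span
   of the inclusion vectors of the subsets of [[n - 1]] of size at most [d = |L|].
   Distinct pairs [(c, d)] give distinct intervals, and by Lucas' theorem at least
   ['C(p, 2) ^ k] pairs [c, d < p ^ k] have [p] not dividing ['C(c, d)]; the [q]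
   pairs with [d = 0] are discarded. *)

Section BinomialsModPrime.
Variable p : nat.
Hypothesis p_pr : prime p.

Lemma prime_dvd_bin_mul_pexp k s j : 0 < j < p ^ k -> p %| 'C(s * p ^ k, j).
Proof.
case: j => [//|j] /andP[_ lt_j_q]; apply/negPn/negP => ndvd.
have : p ^ k %| j.+1 * 'C(s * p ^ k, j.+1).
  by rewrite -mul_bin_diag dvdn_mulr // dvdn_mull.
rewrite Gauss_dvdl; last by rewrite coprimeXl // prime_coprime.
by move/dvdn_leq => /(_ isT); rewrite leqNgt lt_j_q.
Qed.

Lemma prime_dvd_bin_pexp_rem k t r m :
  r < m < p ^ k -> p %| 'C(t * p ^ k + r, m).
Proof.
move=> /andP[lt_r_m lt_m_q]; rewrite -binomial.Vandermonde; apply: dvdn_sum => i _.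
case: (posnP i) => [->|i_gt0]; first by rewrite subn0 (bin_small lt_r_m) muln0 dvdn0.
by rewrite dvdn_mulr // prime_dvd_bin_mul_pexp // i_gt0 (leq_ltn_trans _ lt_m_q) // -ltnS.
Qed.

Lemma prime_ndvd_fact c : c < p -> ~~ (p %| c`!).
Proof.
elim: c => [|c IHc] lt_c_p; first by rewrite dvdn1 neq_ltn prime_gt1 ?orbT.
by rewrite factS Euclid_dvdM // negb_or IHc ?(ltnW lt_c_p) // andbT gtnNdvd.
Qed.

Lemma prime_ndvd_bin c d : d <= c < p -> ~~ (p %| 'C(c, d)).
Proof.
move=> /andP[le_d_c lt_c_p]; apply: contra (prime_ndvd_fact lt_c_p).
by rewrite -(bin_fact le_d_c) => /dvdn_mulr->.
Qed.

(* The truncated subtraction [m - p] forces the case split on [p <= m]. *)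
Lemma bin_addp_mod c m :
  'C(c + p, m) = 'C(c, m) + (if p <= m then 'C(c, m - p) else 0) %[mod p].
Proof.
rewrite addnC -binomial.Vandermonde -modn_summ.
rewrite (eq_bigr (fun j : 'I_m.+1 =>
   (((j == 0 :> nat) + (j == p :> nat)) * 'C(c, m - j)) %% p)); last first.
  move=> j _; case: (ltngtP j p) => [lt_j_p|lt_p_j|->].
  - have [->|j_gt0] := posnP j; first by rewrite bin0.
    rewrite mul0n mod0n; apply/eqP.
    by rewrite -/(dvdn _ _) dvdn_mulr // prime_dvd_bin // j_gt0.
  - by rewrite bin_small // (gtn_eqF (leq_ltn_trans (leq0n _) lt_p_j)).
  - by rewrite binn (gtn_eqF (prime_gt0 p_pr)).
rewrite modn_summ; congr (_ %% p).
under eq_bigr do rewrite mulnDl.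
rewrite big_split /= big_ord_recl /= mul1n subn0 (eq_bigr (fun=> 0)) // big1_eq addn0.
congr (_ + _); case: ifP => le_p_m.
  rewrite (bigD1 (Ordinal (le_p_m : p < m.+1))) //= eqxx mul1n big1 ?addn0 // => i ne_i_p.
  by rewrite -(inj_eq val_inj) /= in ne_i_p; rewrite (negbTE ne_i_p).
apply: big1 => i _; case: eqP => //= eq_i_p.
by have := ltn_ord i; rewrite eq_i_p ltnS le_p_m.
Qed.

Lemma lucas c' d' c0 d0 : c0 < p -> d0 < p ->
  'C(c' * p + c0, d' * p + d0) = 'C(c', d') * 'C(c0, d0) %[mod p].
Proof.
move=> lt_c0_p lt_d0_p; elim: c' d' => [|c IHc] [|d].
- by rewrite !mul0n !add0n bin0 mul1n.
- by rewrite mul0n add0n bin_small ?bin0n ?mul0n // mulSn; lia.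
- rewrite mulSnr -addnA [p + _]addnC addnA bin_addp_mod.
  rewrite !mul0n !add0n leqNgt lt_d0_p addn0 bin0.
  by have := IHc 0; rewrite !mul0n !add0n !bin0.
rewrite mulSnr -addnA [p + _]addnC addnA bin_addp_mod.
have -> : p <= d.+1 * p + d0 by rewrite mulSnr; lia.
have -> : d.+1 * p + d0 - p = d * p + d0 by rewrite mulSnr; lia.
by rewrite -modnDm !IHc modnDm -mulnDl binS.
Qed.

Lemma ndvd_bin_lucas c' d' c0 d0 : c0 < p -> d0 < p ->
  ~~ (p %| 'C(c' * p + c0, d' * p + d0)) = ~~ (p %| 'C(c', d')) && ~~ (p %| 'C(c0, d0)).
Proof.
by move=> lt_c0_p lt_d0_p; rewrite /dvdn lucas // -/(dvdn _ _) Euclid_dvdM // negb_or.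
Qed.

End BinomialsModPrime.

Lemma big_nat_mul_split (F : nat -> nat) m p :
  \sum_(0 <= i < m * p) F i = \sum_(0 <= i < m) \sum_(0 <= j < p) F (i * p + j).
Proof.
elim: m => [|m IHm]; first by rewrite mul0n !big_geq.
rewrite mulSnr big_nat_recr //= -IHm (big_cat_nat (leq0n (m * p)) (leq_addr p _)) /=.
congr (_ + _); rewrite -{1}(add0n (m * p)) big_addn addKn.
by apply: eq_bigr => j _; rewrite addnC.
Qed.

Definition nondiv_bin_count p m :=
  \sum_(0 <= c < m) \sum_(0 <= d < m) ~~ (p %| 'C(c, d)).

Lemma nondiv_bin_count_mulp p m : prime p ->
  nondiv_bin_count p (m * p) = nondiv_bin_count p m * nondiv_bin_count p p.
Proof.
move=> p_pr; rewrite /nondiv_bin_count big_nat_mul_split big_distrlr.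
apply: eq_bigr => c' _; apply: eq_big_nat => c0 /andP[_ lt_c0_p].
rewrite big_nat_mul_split big_distrlr.
apply: eq_bigr => d' _; apply: eq_big_nat => d0 /andP[_ lt_d0_p].
by rewrite ndvd_bin_lucas // -mulnb.
Qed.

Lemma bin2_le_nondiv_bin_count p : prime p -> 'C(p, 2) <= nondiv_bin_count p p.
Proof.
move=> p_pr; rewrite /nondiv_bin_count -bin2_sum big_nat_cond [leqRHS]big_nat_cond.
apply: leq_sum => c /andP[/andP[_ lt_c_p] _].
rewrite (big_cat_nat (leq0n c) (ltnW lt_c_p)) /=; apply: leq_trans (leq_addr _ _).
rewrite -[leqLHS](subn0 c) -[leqLHS]muln1 -sum_nat_const_nat.
rewrite big_nat_cond [leqRHS]big_nat_cond; apply: leq_sum => d /andP[/andP[_ lt_d_c] _].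
by rewrite prime_ndvd_bin // (ltnW lt_d_c).
Qed.

Lemma bin2X_le_nondiv_bin_count p k : prime p -> 'C(p, 2) ^ k <= nondiv_bin_count p (p ^ k).
Proof.
move=> p_pr; elim: k => [|k IHk].
  by rewrite /nondiv_bin_count !big_nat1 bin0 dvdn1 neq_ltn prime_gt1 ?orbT.
by rewrite !expnSr nondiv_bin_count_mulp // leq_mul // bin2_le_nondiv_bin_count.
Qed.

Local Open Scope ring_scope.

Section InclusionSpan.
Variables (K : fieldType) (n d : nat) (F : {set {set 'I_n.+1}}).

(* The ground set [[n + 1]] is ['I_n.+1]; [[set~ ord_max]] plays the role of [[n]]. *)
Definition small_sets : {set {set 'I_n.+1}} :=
  [set T : {set 'I_n.+1} | (T \subset [set~ ord_max]) && (#|T| <= d)%N].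

Definition inclusion_mx : 'M[K]_(#|small_sets|, #|F|) :=
  \matrix_(t < #|small_sets|, j < #|F|) ((enum_val t \subset enum_val j)%:R).

Definition spanned (f : {set 'I_n.+1} -> K) : bool :=
  (\row_(j < #|F|) f (enum_val j) <= inclusion_mx)%MS.

Lemma eq_spanned f g : f =1 g -> spanned f = spanned g.
Proof. by move=> eq_fg; congr (_ <= _)%MS; apply/rowP => j; rewrite !mxE eq_fg. Qed.

Lemma spanned_incl T : T \in small_sets -> spanned (fun B => (T \subset B)%:R).
Proof.
move=> small_T; rewrite /spanned -(enum_rankK_in small_T small_T).
rewrite (_ : \row_j _ = row (enum_rank_in small_T T) inclusion_mx) ?row_sub //.
by apply/rowP => j; rewrite !mxE.
Qed.

Lemma spanned_add f g : spanned f -> spanned g -> spanned (fun B => f B + g B).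
Proof.
move=> sf sg; rewrite /spanned.
rewrite (_ : \row_j _ = \row_j f (enum_val j) + \row_j g (enum_val j)).
  exact: addmx_sub.
by apply/rowP => j; rewrite !mxE.
Qed.

Lemma spanned_scale a f : spanned f -> spanned (fun B => a * f B).
Proof.
move=> sf; rewrite /spanned (_ : \row_j _ = a *: \row_j f (enum_val j)).
  exact: scalemx_sub.
by apply/rowP => j; rewrite !mxE.
Qed.

Lemma spanned_sum (I : finType) (P : pred I) (f : I -> {set 'I_n.+1} -> K) :
  (forall i, P i -> spanned (f i)) -> spanned (fun B => \sum_(i | P i) f i B).
Proof.
move=> sf; rewrite /spanned (_ : \row_j _ = \sum_(i | P i) \row_j f i (enum_val j)).
  exact: summx_sub.
by apply/rowP => j; rewrite !mxE summxE; apply: eq_bigr => i _; rewrite mxE.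
Qed.

Lemma spanned_incl_disj U W : U :|: W \subset [set~ ord_max] -> (#|U| + #|W| <= d)%N ->
  spanned (fun B => ((U \subset B) && [disjoint W & B])%:R).
Proof.
move: U; have [m] := ubnP #|W|; elim: m W => // m IHm W lt_W_m U.
have [->|[x W_x]] := set_0Vmem W.
  rewrite setU0 cards0 addn0 => sub_U le_U_d.
  rewrite (@eq_spanned _ (fun B => (U \subset B)%:R)) => [|B].
    by apply: spanned_incl; rewrite inE sub_U.
  by rewrite -setI_eq0 set0I eqxx andbT.
move=> sub_UW le_UW_d.
set W' := W :\ x.
have card_W : #|W| = #|W'|.+1 by rewrite (cardsD1 x W) W_x.
have sub_W' : W' \subset W by exact: subD1set.
(* inclusion-exclusion on [x]: [x \notin B] = 1 - [x \in B] *)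
rewrite (@eq_spanned _ (fun B => ((U \subset B) && [disjoint W' & B])%:R +
   (-1) * (((x |: U) \subset B) && [disjoint W' & B])%:R)) => [|B]; last first.
  rewrite -(setD1K W_x) !disjoints_subset !subUset !sub1set inE.
  by case: (x \in B); case: (U \subset B); case: (W' \subset ~: B);
     rewrite /= ?mulr0n ?mulr1n ?mulr0 ?addr0 ?mulN1r ?subrr.
have lt_W'_m : (#|W'| < m)%N by rewrite -ltnS -card_W.
apply: spanned_add; last apply: spanned_scale; apply: IHm => //.
- by apply: subset_trans sub_UW; rewrite setUS.
- by apply: leq_trans le_UW_d; rewrite card_W leq_add2l.
- apply: subset_trans sub_UW; rewrite -setUA subUset sub1set !inE W_x orbT /=.
  exact: setUS.
- by move: le_UW_d; rewrite cardsU1 card_W; case: (x \notin U) => /=; lia.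
Qed.

Lemma spanned_bin_setD (X : {set 'I_n.+1}) j : X \subset [set~ ord_max] -> (j <= d)%N ->
  spanned (fun B => 'C(#|X :\: B|, j)%:R).
Proof.
move=> sub_X le_j_d.
rewrite (@eq_spanned _ (fun B => \sum_(T : {set 'I_n.+1} | (T \subset X) && (#|T| == j))
   ((set0 \subset B) && [disjoint T & B])%:R)) => [|B]; last first.
  rewrite -natr_sum -cards_draws -sum1_card; congr (_%:R).
  rewrite big_mkcond [RHS]big_mkcond /=; apply: eq_bigr => T _.
  rewrite inE subsetD sub0set.
  by case: (T \subset X); case: (#|T| == j); case: [disjoint T & B].
apply: spanned_sum => T /andP[sub_T_X /eqP card_T].
by apply: spanned_incl_disj; rewrite ?set0U ?(subset_trans sub_T_X) // cards0 card_T.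
Qed.

Lemma spanned_bin_setI (X : {set 'I_n.+1}) j : X \subset [set~ ord_max] -> (j <= d)%N ->
  spanned (fun B => 'C(#|X :&: B|, j)%:R).
Proof.
move=> sub_X le_j_d.
rewrite (@eq_spanned _ (fun B => \sum_(T : {set 'I_n.+1} | (T \subset X) && (#|T| == j))
   ((T \subset B) && [disjoint set0 & B])%:R)) => [|B]; last first.
  rewrite -natr_sum -cards_draws -sum1_card; congr (_%:R).
  rewrite big_mkcond [RHS]big_mkcond /=; apply: eq_bigr => T _.
  rewrite inE subsetI -setI_eq0 set0I eqxx andbT.
  by case: (T \subset X); case: (#|T| == j); case: (T \subset B).
apply: spanned_sum => T /andP[sub_T_X /eqP card_T].
by apply: spanned_incl_disj; rewrite ?setU0 ?(subset_trans sub_T_X) // cards0 card_T addn0.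
Qed.

Lemma spanned_bin_shift (g : {set 'I_n.+1} -> nat) c :
  (forall j, (j <= d)%N -> spanned (fun B => 'C(g B, j)%:R)) ->
  spanned (fun B => 'C(g B + c, d)%:R).
Proof.
move=> spanned_g.
rewrite (@eq_spanned _ (fun B => \sum_(j < d.+1) 'C(c, d - j)%:R * 'C(g B, j)%:R)) => [|B].
  by apply: spanned_sum => j _; apply/spanned_scale/spanned_g; rewrite -ltnS.
by rewrite -binomial.Vandermonde natr_sum; apply: eq_bigr => j _; rewrite natrM mulrC.
Qed.

(* Rows of sets [A] containing the last point use [|B \ A| = |~: A :&: B|], so that
   every row is indexed by a subset of [[set~ ord_max]]. *)
Lemma card_le_card_small_sets c :
  'C(c, d)%:R != 0 :> K ->
  {in F &, forall A B, A != B -> 'C(#|A :\: B| + c, d)%:R = 0 :> K} ->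
  (#|F| <= #|small_sets|)%N.
Proof.
move=> bin_neq0 bin_off_eq0.
pose h (A B : {set 'I_n.+1}) : K :=
  if ord_max \in A then 'C(#|~: A :&: B| + c, d)%:R else 'C(#|A :\: B| + c, d)%:R.
pose M := \matrix_(i < #|F|, j < #|F|) h (enum_val i) (enum_val j).
have rows_spanned : (M <= inclusion_mx)%MS.
  apply/row_subP => i; rewrite (_ : row i M = \row_(j < #|F|) h (enum_val i) (enum_val j)).
    rewrite /h; case A_max: (ord_max \in enum_val i).
      apply: (spanned_bin_shift (g := fun B => #|~: enum_val i :&: B|)) => j le_j_d.
      by apply: spanned_bin_setI; rewrite // setCS sub1set.
    apply: (spanned_bin_shift (g := fun B => #|enum_val i :\: B|)) => j le_j_d.
    by apply: spanned_bin_setD; rewrite // subsetC sub1set inE A_max.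
  by apply/rowP => j; rewrite !mxE.
have M_scalar : M = 'C(c, d)%:R%:M.
  apply/matrixP => i j; rewrite !mxE; case: eqP => [<-|/eqP ne_ij].
    by rewrite /h setDv setIC setICr !cards0 add0n mulr1n; case: ifP.
  have ne_AB : enum_val i != enum_val j by apply: contra ne_ij => /eqP/enum_val_inj->.
  rewrite mulr0n /h; case: ifP => _; last exact: bin_off_eq0 (enum_valP _) (enum_valP _) ne_AB.
  by rewrite setIC -setDE bin_off_eq0 ?enum_valP // eq_sym.
have := mxrankS rows_spanned; rewrite M_scalar -scalemx1 mxrank_scale_nz // mxrank1.
by move/leq_trans; apply; apply: rank_leq_row.
Qed.

End InclusionSpan.

Local Close Scope ring_scope.

Lemma card_small_sets n d : #|small_sets n d| = \sum_(i < d.+1) 'C(n, i).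
Proof.
have card_draws i :
    #|[set T : {set 'I_n.+1} | (T \subset [set~ ord_max]) && (#|T| == i)]| = 'C(n, i).
  by rewrite cards_draws cardsC1 card_ord.
elim: d => [|d IHd].
  by rewrite big_ord1 -card_draws; apply: eq_card => T; rewrite !inE leqn0.
rewrite big_ord_recr /= -IHd -card_draws -(cardsID (small_sets n d) (small_sets n d.+1)).
congr (_ + _); apply: eq_card => T; rewrite !inE;
  case: (T \subset [set~ ord_max]); rewrite ?andbF //=.
  by rewrite andb_idl // => /leqW.
by rewrite -ltnNge eqn_leq andbC.
Qed.

Section OrdInterval.
Variable q : nat.

Definition ord_interval (a b : nat) : {set 'I_q} := [set i : 'I_q | a <= i <= b].

Lemma card_ord_interval a b : b < q -> #|ord_interval a b| = b.+1 - a.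
Proof.
move=> lt_b_q; rewrite -[RHS]muln1 -sum_nat_const_nat (big_nat_widenl _ _ _ _ _ (leq0n a)).
rewrite (big_nat_widen _ _ _ _ _ lt_b_q) big_mkord -sum1_card.
by apply: eq_bigl => i; rewrite inE ltnS.
Qed.

Lemma ord_interval_is_interval a b :
  0 < a -> a <= b -> b < q -> is_interval_in (ord_interval a b).
Proof.
move=> a_gt0 le_a_b lt_b_q; have lt_a_q := leq_ltn_trans le_a_b lt_b_q.
apply/existsP; exists (Ordinal lt_a_q); apply/existsP; exists (Ordinal lt_b_q).
by rewrite /= a_gt0 le_a_b /ord_interval eqxx.
Qed.

Lemma ord_interval_inj a b a' b' : a <= b -> b < q -> a' <= b' -> b' < q ->
  ord_interval a b = ord_interval a' b' -> a = a' /\ b = b'.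
Proof.
move=> le_a_b lt_b_q le_a_b' lt_b_q' eq_I.
have mem_eq x : x < q -> (a <= x <= b) = (a' <= x <= b').
  by move=> lt_x_q; move/setP/(_ (Ordinal lt_x_q)): eq_I; rewrite !inE.
move: (mem_eq a) (mem_eq b) (mem_eq a') (mem_eq b'); lia.
Qed.

End OrdInterval.

Lemma good_bound_ord_interval p k n c d :
  prime p -> 0 < n -> 0 < d -> d <= c -> c < p ^ k -> ~~ (p %| 'C(c, d)) ->
  good_bound n (ord_interval (p ^ k) (p ^ k - c) (p ^ k - c + d.-1)).
Proof.
move=> p_pr; set q := p ^ k; case: n => [//|n] _ d_gt0 le_d_c lt_c_q bin_ndvd.
have dvd_Fp m : (m%:R == 0 :> 'F_p)%R = (p %| m) by rewrite (dvdn_pcharf (pchar_Fp p_pr)).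
apply/forallP => F; apply/implyP => sperner_F.
rewrite card_ord_interval; last by lia.
have -> : (q - c + d.-1).+1 - (q - c) = d by lia.
rewrite -card_small_sets; apply: (card_le_card_small_sets (K := 'F_p) (c := c)).
  by rewrite dvd_Fp.
move=> A B F_A F_B ne_AB; apply/eqP; rewrite dvd_Fp.
move/forallP/(_ A): sperner_F; rewrite F_A => /forallP/(_ B); rewrite F_B ne_AB /=.
case/existsP => l /andP[]; rewrite inE (modn_small (ltn_ord l)).
move=> /andP[le_l le_r] /eqP mod_AB.
(* [|A \ B| + c] is [l - (q - c) < d] modulo [q] *)
have -> : #|A :\: B| + c = (#|A :\: B| %/ q).+1 * q + (l - (q - c)).
  by rewrite {1}(divn_eq #|A :\: B| q) mod_AB mulSnr; lia.
by apply: prime_dvd_bin_pexp_rem => //; lia.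
Qed.

Definition nondiv_pairs p m : {set 'I_m * 'I_m} :=
  [set x : 'I_m * 'I_m | (0 < x.2) && ~~ (p %| 'C(x.1, x.2))].

Lemma nondiv_bin_count_le p m : nondiv_bin_count p m <= #|nondiv_pairs p m| + m.
Proof.
have -> : #|nondiv_pairs p m| =
    \sum_(0 <= c < m) \sum_(0 <= d < m) ((0 < d) && ~~ (p %| 'C(c, d))).
  rewrite -sum1_card big_mkcond /= big_mkord.
  under [RHS]eq_bigr do rewrite big_mkord.
  rewrite pair_big /=; apply: eq_bigr => x _; rewrite inE; by case: ifP.
apply: (@leq_trans
  (\sum_(0 <= c < m) (\sum_(0 <= d < m) ((0 < d) && ~~ (p %| 'C(c, d)) : nat) + 1)));
  last first.
  by rewrite big_split /= sum_nat_const_nat subn0 muln1.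
case: m => [|m]; first by rewrite /nondiv_bin_count big_geq.
apply: leq_sum => c _; rewrite big_ltn // [in leqRHS]big_ltn //= add0n [leqRHS]addnC.
apply: leq_add; first exact: leq_b1.
by apply/eq_leq/eq_big_nat => d /andP[d_gt0 _]; rewrite d_gt0.
Qed.

Lemma card_nondiv_pairs_le_good p k n : prime p -> 0 < n ->
  #|nondiv_pairs p (p ^ k)| <=
  #|[set L : {set 'I_(p ^ k)} | is_interval_in L && good_bound n L]|.
Proof.
move=> p_pr n_gt0; set q := p ^ k.
pose f (x : 'I_q * 'I_q) := ord_interval q (q - x.1) (q - x.1 + x.2.-1).
have nondiv_le x :
    x \in nondiv_pairs p q -> [/\ 0 < x.2, x.2 <= x.1 & ~~ (p %| 'C(x.1, x.2))].
  rewrite inE => /andP[d_gt0 bin_ndvd]; split=> //.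
  by rewrite -bin_gt0 lt0n; apply: contraNneq bin_ndvd => ->.
have f_inj : {in nondiv_pairs p q &, injective f}.
  move=> [c d] [c' d'] /nondiv_le[/= d_gt0 le_d_c _] /nondiv_le[/= d'_gt0 le_d'_c' _].
  have lt_c_q : c < q := ltn_ord c; have lt_c'_q : c' < q := ltn_ord c'.
  rewrite /f /= => /ord_interval_inj inj_I.
  have [||||eq_a eq_b] := inj_I; try lia.
  by congr pair; apply: val_inj => /=; lia.
rewrite -(card_in_imset f_inj); apply/subset_leq_card/subsetP => _ /imsetP[[c d] P_cd ->].
have [/= d_gt0 le_d_c bin_ndvd] := nondiv_le _ P_cd; have lt_c_q : c < q := ltn_ord c.
by rewrite inE ord_interval_is_interval ?good_bound_ord_interval //=; lia.
Qed.

Theorem mainTheorem13 (n p k : nat) :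
  0 < n -> prime p -> 2 <= k ->
  (((p ^ k * (p - 1) ^ k)%:R / (2 ^ k)%:R - (p ^ k)%:R : rat)
     <= (#|[set L : {set 'I_(p ^ k)} | is_interval_in L && good_bound n L]|)%:R)%R.
Proof.
(* The bound holds for every [k]. *)
move=> n_gt0 p_pr _.
set G := #|[set L : {set 'I_(p ^ k)} | is_interval_in L && good_bound n L]|.
have bin2X_le : 'C(p, 2) ^ k <= G + p ^ k.
  apply: leq_trans (bin2X_le_nondiv_bin_count k p_pr) _.
  apply: leq_trans (nondiv_bin_count_le p (p ^ k)) _.
  by rewrite leq_add2r card_nondiv_pairs_le_good.
have -> : p ^ k * (p - 1) ^ k = 'C(p, 2) ^ k * 2 ^ k.
  by rewrite -!expnMn [in RHS]mulnC (mul_bin_left p 1) bin1 mulnC.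
rewrite natrM mulfK; last by rewrite pnatr_eq0 expn_eq0.
by rewrite lerBlDr -natrD ler_nat.
Qed.
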